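(* If a graph $G$ contains a path on $k$ vertices as a subgraph for every $k\in\mathbb{N}$, then $G$ is $\omega$-evadible.
   Context: Cat Herding is played on a simple, possibly infinite graph $G$. The cat first places its token on a vertex. Then the players alternate, the herder moving first: the herder deletes one edge of the current graph, and then, unless the cat's current vertex has degree $0$ in the current graph, the cat moves its token along a finite path with at least one edge in the current graph to a different vertex. The cat is captured when its vertex has degree $0$ in the current graph. $G$ is $k$-evadible if the cat has a strategy (including its choice of starting vertex) that, against every herder strategy, yields a legal cat move after each of the first $k-1$ edge deletions; $G$ is $\omega$-evadible if it is $k$-evadible for every $k\in\mathbb{N}$. *)

From Stdlib Require Import List Relations.
Import ListNotations.

Definition simple_graph {V : Type} (adj : V -> V -> Prop) : Prop :=
  (forall x y, adj x y -> adj y x) /\ (forall x, ~ adj x x).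

Definition deleted {V : Type} (D : list (V * V)) (x y : V) : Prop :=
  In (x, y) D \/ In (y, x) D.

Definition cur_adj {V : Type} (adj : V -> V -> Prop) (D : list (V * V))
  (x y : V) : Prop := adj x y /\ ~ deleted D x y.

Definition cat_move {V : Type} (adj : V -> V -> Prop) (D : list (V * V))
  (v w : V) : Prop := w <> v /\ clos_trans V (cur_adj adj D) v w.

(* survives adj n D v : with deleted edges D and the cat at v (cat to be
   moved after the herder's next deletion), the cat can guarantee a legal
   move after each of the next n edge deletions, whatever the herder does. *)
Fixpoint survives {V : Type} (adj : V -> V -> Prop) (n : nat)
  (D : list (V * V)) (v : V) : Prop :=
  match n with
  | 0 => True
  | S m => forall x y, cur_adj adj D x y ->
      exists w, cat_move adj ((x, y) :: D) v w /\ survives adj m ((x, y) :: D) w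
  end.

(* G is k-evadible: some starting vertex lets the cat make a legal move
   after each of the first k-1 deletions, against every herder play. *)
Definition k_evadible {V : Type} (adj : V -> V -> Prop) (k : nat) : Prop :=
  exists v : V, survives adj (k - 1) [] v.

Definition omega_evadible {V : Type} (adj : V -> V -> Prop) : Prop :=
  forall k : nat, k_evadible adj k.

Definition has_path_subgraph {V : Type} (adj : V -> V -> Prop) (k : nat) : Prop :=
  exists f : nat -> V,
    (forall i j, i < k -> j < k -> f i = f j -> i = j) /\
    (forall i, S i < k -> adj (f i) (f (S i))).

From Stdlib Require Import Relations Lia Classical PeanoNat.

(* The cat only ever uses a path on 2·2^k + 1 vertices.  With k moves to go
   it sits at the midpoint of an undamaged stretch of 2·2^k path edges.  A
   deleted edge of the graph is at most one edge of the path, so one of the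
   two halves of the stretch stays undamaged, and the cat walks along the
   path to the midpoint of that half: a legal move, leaving it at the centre
   of an undamaged stretch of 2·2^(k-1) edges. *)

Lemma deleted_cons {V : Type} (x y : V) D a b :
  deleted ((x, y) :: D) a b <->
  ((x = a /\ y = b) \/ (x = b /\ y = a)) \/ deleted D a b.
Proof.
  unfold deleted; simpl; split.
  - intros [[E|H]|[E|H]]; try injection E as -> ->; tauto.
  - intros [[[-> ->]|[-> ->]]|[H|H]]; tauto.
Qed.

Lemma cur_adj_sym {V : Type} (adj : V -> V -> Prop) D :
  (forall x y, adj x y -> adj y x) ->
  forall a b, cur_adj adj D a b -> cur_adj adj D b a.
Proof. unfold cur_adj, deleted; intros Hsym a b [Hab Hnd]; split; auto; tauto. Qed.

Lemma clos_trans_sym {V : Type} (R : V -> V -> Prop) :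
  (forall a b, R a b -> R b a) ->
  forall a b, clos_trans V R a b -> clos_trans V R b a.
Proof.
  intros HR a b H; induction H.
  - apply t_step; auto.
  - eapply t_trans; eauto.
Qed.

Section PathStrategy.

Variables (V : Type) (adj : V -> V -> Prop) (f : nat -> V) (N : nat).
Hypothesis adj_sym : forall x y, adj x y -> adj y x.
Hypothesis f_inj : forall i j, i < N -> j < N -> f i = f j -> i = j.
Hypothesis f_path : forall i, S i < N -> adj (f i) (f (S i)).

Definition intact (D : list (V * V)) (a b : nat) : Prop :=
  forall i, a <= i < b -> ~ deleted D (f i) (f (S i)).

Lemma path_edge_unique x y i j : S i < N -> S j < N ->
  (x = f i /\ y = f (S i)) \/ (x = f (S i) /\ y = f i) ->
  (x = f j /\ y = f (S j)) \/ (x = f (S j) /\ y = f j) -> i = j.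
Proof.
  intros Hi Hj Ei Ej.
  destruct Ei as [[-> E1]|[-> E1]], Ej as [[E2 E3]|[E2 E3]]; subst y.
  - apply f_inj; [lia|lia|congruence].
  - pose proof (f_inj i (S j) ltac:(lia) ltac:(lia) E2).
    pose proof (f_inj (S i) j ltac:(lia) ltac:(lia) E3); lia.
  - pose proof (f_inj (S i) j ltac:(lia) ltac:(lia) E2).
    pose proof (f_inj i (S j) ltac:(lia) ltac:(lia) E3); lia.
  - pose proof (f_inj (S i) (S j) ltac:(lia) ltac:(lia) E2); lia.
Qed.

Lemma intact_cons_split D x y a m b : a <= m <= b -> b < N ->
  intact D a b -> intact ((x, y) :: D) a m \/ intact ((x, y) :: D) m b.
Proof.
  intros Hm Hb Hab.
  destruct (classic (intact ((x, y) :: D) a m)) as [Hl|Hl]; [left; exact Hl|right].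
  intros j Hj Hdj; apply Hl; intros i Hi Hdi.
  apply deleted_cons in Hdi as [Ei|Di]; [|apply (Hab i); [lia|exact Di]].
  apply deleted_cons in Hdj as [Ej|Dj]; [|apply (Hab j); [lia|exact Dj]].
  assert (i = j) by (apply (path_edge_unique x y); [lia|lia|tauto|tauto]); lia.
Qed.

Lemma intact_reach D a b : a < b < N -> intact D a b ->
  clos_trans V (cur_adj adj D) (f a) (f b).
Proof.
  induction b as [|b IH]; intros Hab Hint; [lia|].
  assert (Hedge : cur_adj adj D (f b) (f (S b))).
  { split; [apply f_path; lia|apply Hint; lia]. }
  destruct (Nat.eq_dec a b) as [->|Hne]; [apply t_step; exact Hedge|].
  apply t_trans with (f b); [|apply t_step; exact Hedge].
  apply IH; [lia|intros i Hi; apply Hint; lia].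
Qed.

Lemma intact_cat_move D a b : a < b < N -> intact D a b ->
  cat_move adj D (f a) (f b) /\ cat_move adj D (f b) (f a).
Proof.
  intros Hab Hint.
  assert (Hne : f a <> f b) by (intro E; apply f_inj in E; lia).
  pose proof (intact_reach D a b Hab Hint) as Hreach.
  split; split; auto.
  apply clos_trans_sym; [apply cur_adj_sym; exact adj_sym|exact Hreach].
Qed.

Lemma intact_survives n : forall c D, c + 2 * 2 ^ n < N ->
  intact D c (c + 2 * 2 ^ n) -> survives adj n D (f (c + 2 ^ n)).
Proof.
  induction n as [|n IH]; intros c D Hc Hint; [exact I|].
  intros x y _.
  rewrite Nat.pow_succ_r' in *.
  pose proof (Nat.pow_nonzero 2 n ltac:(lia)) as Hpos.
  set (L := 2 ^ n) in *.
  destruct (intact_cons_split D x y c (c + 2 * L) (c + 2 * (2 * L)))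
    as [Hlow|Hhigh]; [lia|lia|exact Hint|..].
  - exists (f (c + L)); split.
    + apply (intact_cat_move _ (c + L) (c + 2 * L)); [lia|].
      intros i Hi; apply Hlow; lia.
    + apply IH; [lia|exact Hlow].
  - exists (f (c + 2 * L + L)); split.
    + apply (intact_cat_move _ (c + 2 * L) (c + 2 * L + L)); [lia|].
      intros i Hi; apply Hhigh; lia.
    + apply IH; [lia|intros i Hi; apply Hhigh; lia].
Qed.

End PathStrategy.

Theorem mainTheorem16 (V : Type) (adj : V -> V -> Prop) :
  simple_graph adj ->
  (forall k : nat, has_path_subgraph adj k) ->
  omega_evadible adj.
Proof.
  intros [adj_sym _] paths k.
  set (n := k - 1).
  destruct (paths (S (2 * 2 ^ n))) as [f [f_inj f_path]].
  exists (f (0 + 2 ^ n)).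
  apply (intact_survives V adj f (S (2 * 2 ^ n))); auto.
  intros i _; unfold deleted; simpl; tauto.
Qed.
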